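(* Let $R\in\mathcal{RS}_n$ and let $S=\mathrm{Ctr}(R)$ be the corresponding sticky tree. Suppose that the leaf $f$ is the certificate of an internal node $u$ of positive depth in $R$, and let $v$ be the parent of $f$. Let $u',v'$ be the nodes of $S$ corresponding to $u,v$. Then $v'$ is the certificate of $u'$ in $S$.
   Context: Plane trees: a plane tree is a rooted tree in which the children of every node are linearly ordered (left to right); the root has depth $0$, a child of a node of depth $d$ has depth $d+1$; leaves are nodes without children, internal nodes have at least one child. The prefix order is: the root, followed by the prefix order of the subtree of its leftmost child, then of its second child, and so on. $R_u$ (or $S_u$) denotes the subtree rooted at $u$. Sticky trees: a sticky tree is a plane tree $S$ with node set $V$ and a labeling $\ell:V\to\mathbb{N}$ such that: (1) every node $u$ of depth $d$ has $0\le\ell(u)\le d$; (2) every node $u$ of depth $d>0$ has some $v\in S_u$ (possibly $v=u$) with $\ell(v)<d$; (3) for every node $u$ of depth $d$, if some $v\in S_u$ has $\ell(v)=d$, then every node of $S_u$ (including $u$) preceding $v$ in prefix order has label at least $d$. The certificate of a non-root node $u$ of depth $d$ in a sticky tree is the first node, in prefix order, of $S_u$ whose label is $<d$. Decorated trees: a decorated tree is a plane tree $R$ with an integer labeling $\ell$ defined only on its leaves such that: (1') for every leaf $f$ whose parent has depth $d$, $-1\le\ell(f)\le d-1$; (2') every internal node $u$ of depth $d>0$ has a descendant leaf $f$ with $\ell(f)<d-1$; (3') for every node $t$ of depth $d$ and every child $u$ of $t$, if some leaf $f$ of $R_u$ has $\ell(f)=d$, then every leaf of $R_u$ preceding $f$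 in prefix order has label at least $d$. The certificate of an internal node $u$ of depth $d>0$ in a decorated tree is the first leaf, in prefix order, of $R_u$ with label $<d-1$. $\mathcal{RS}_n$ is the set of decorated trees with $n+1$ internal nodes and $n+1$ leaves in which every internal node has a leaf as its first child. The map $\mathrm{Ctr}$: for $R\in\mathcal{RS}_n$, $\mathrm{Ctr}(R)$ is obtained by deleting all leaves of $R$, each remaining (formerly internal) node $w$ receiving label $\ell(f)+1$ where $f$ is the first child of $w$ in $R$; the nodes of $\mathrm{Ctr}(R)$ thus correspond to the internal nodes of $R$. $\mathrm{Ctr}(R)$ is a sticky tree. *)

From mathcomp Require Import all_boot all_order all_algebra.
Set Implicit Arguments. Unset Strict Implicit. Unset Printing Implicit Defensive.
Import GRing.Theory Num.Theory.

Inductive tree := Node of seq tree.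

(* Nodes are addressed by paths (sequences of child indices, 0-based, from
   the root); the root is [::], depth of node p is size p. *)
Fixpoint subt (t : tree) (p : seq nat) : option tree :=
  match p with
  | [::] => Some t
  | i :: p' => let: Node cs := t in
               if i < size cs then subt (nth t cs i) p' else None
  end.

Definition is_node (t : tree) (p : seq nat) : bool :=
  if subt t p is Some _ then true else false.
Definition is_leaf (t : tree) (p : seq nat) : bool :=
  if subt t p is Some (Node [::]) then true else false.
Definition is_internal (t : tree) (p : seq nat) : bool :=
  if subt t p is Some (Node (_ :: _)) then true else false.

Definition parent (p : seq nat) : seq nat := take (size p).-1 p.

Fixpoint preorder (t : tree) : seq (seq nat) :=
  let: Node cs := t in
  [::] :: (fix aux (i : nat) (cs : seq tree) : seq (seq nat) :=
             match cs with
             | [::] => [::]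
             | c :: cs' => map (cons i) (preorder c) ++ aux i.+1 cs'
             end) 0 cs.

Definition sub_nodes (t : tree) (u : seq nat) : seq (seq nat) :=
  if subt t u is Some s then map (cat u) (preorder s) else [::].

Definition precedes (s : seq (seq nat)) (g f : seq nat) : bool :=
  g \in take (index f s) s.

(* Decorated trees: shape t with labels l (only the values on leaves matter). *)
Definition decorated (t : tree) (l : seq nat -> int) : Prop :=
  (forall f, is_leaf t f -> f != [::] ->
     (-1 <= l f)%R && (l f <= Posz (size f) - 2)%R) /\
  (forall u, is_internal t u -> 0 < size u ->
     exists2 f, f \in sub_nodes t u & is_leaf t f && (l f < Posz (size u) - 1)%R) /\
  (* (3') : t0 of depth d, u a child of t0 *)
  (forall t0 i, is_node t (rcons t0 i) ->
     forall f, f \in sub_nodes t (rcons t0 i) -> is_leaf t f ->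
       l f = Posz (size t0) ->
       forall g, is_leaf t g -> precedes (sub_nodes t (rcons t0 i)) g f ->
         (Posz (size t0) <= l g)%R).

Definition in_RS (n : nat) (t : tree) (l : seq nat -> int) : Prop :=
  [/\ decorated t l,
      count (is_internal t) (preorder t) = n.+1,
      count (is_leaf t) (preorder t) = n.+1 &
      forall u, is_internal t u -> is_leaf t (rcons u 0)].

Definition dec_cert (t : tree) (l : seq nat -> int) (u : seq nat) : option (seq nat) :=
  ohead [seq f <- sub_nodes t u | is_leaf t f && (l f < Posz (size u) - 1)%R].

Definition stk_cert (t : tree) (l : seq nat -> int) (u : seq nat) : option (seq nat) :=
  ohead [seq v <- sub_nodes t u | (l v < Posz (size u))%R].

Fixpoint ctr_shape (t : tree) : tree :=
  let: Node cs := t in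
  Node ((fix aux (cs : seq tree) : seq tree :=
           match cs with
           | [::] => [::]
           | Node [::] :: cs' => aux cs'
           | c :: cs' => ctr_shape c :: aux cs'
           end) cs).

Definition internalb (t : tree) : bool := if t is Node (_ :: _) then true else false.

Fixpoint ctr_path (t : tree) (p : seq nat) : seq nat :=
  match p with
  | [::] => [::]
  | i :: p' => let: Node cs := t in
               count internalb (take i cs) :: ctr_path (nth t cs i) p'
  end.

(* Labels of Ctr(t): the node corresponding to internal node w receives
   l(f) + 1, f the first child of w. *)
Definition ctr_label (t : tree) (l : seq nat -> int) (q : seq nat) : int :=
  match [seq p <- preorder t | is_internal t p & ctr_path t p == q] with
  | p :: _ => (l (rcons p 0) + 1)%R
  | [::] => 0%R
  end.

(* Prefix order is the lexicographic order on paths, so a certificate is the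
   lexicographically least node of a subtree satisfying a label bound.  In a
   tree of RS_n the map sending an internal node to its first child is an
   injection of internal nodes into leaves, and both sets have n+1 elements;
   hence every leaf f is the first child of its parent v, and the label of f
   is carried, shifted by one, by the image v' of v in Ctr(R).  Ctr maps the
   internal nodes of R bijectively onto the nodes of Ctr(R), preserving and
   reflecting ancestry and preserving the lexicographic order.  So the nodes
   of S_u' with label < d are the images of the internal nodes w below u whose
   first child has label < d - 1; f is the least such first child, so v' is
   the least such node. *)

From mathcomp Require Import all_boot all_order all_algebra.
From Stdlib Require List.
Set Implicit Arguments. Unset Strict Implicit. Unset Printing Implicit Defensive.
Import Order.TTheory.

Local Notation lexi := (@Order.le _ (seqlexi nat)).
Local Notation ltxi := (@Order.lt _ (seqlexi nat)).

Lemma lexi_catl d (T : porderType d) (u p q : seq T) :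
  (u ++ p <= u ++ q :> seqlexi T)%O = (p <= q :> seqlexi T)%O.
Proof. by elim: u => //= a u IH; rewrite eqhead_lexiE. Qed.

Lemma lexi_rcons0 (v w : seq nat) : lexi (rcons v 0) (rcons w 0) -> lexi v w.
Proof.
elim: v w => [//|a v IH] [|b w] /=.
  by rewrite lexi_cons leEnat leqn0 => /andP[/eqP-> /=]; rewrite lexis0; case: v {IH}.
by rewrite !lexi_cons => /andP[-> /implyP le_ab]; apply/implyP => /le_ab /IH.
Qed.

Lemma prefix_rcons_eq (T : eqType) (u v : seq T) x :
  prefix u (rcons v x) = (u == rcons v x) || prefix u v.
Proof.
elim: v u => [|y v IH] [|z u] //; first by rewrite prefixs1 prefixs0 orbF.
by rewrite rcons_cons !prefix_cons IH eqseq_cons; case: (z == y).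
Qed.

Lemma ohead_filter_sortedP d (T : porderType d) (P : pred T) (s : seq T) a :
  sorted <=%O s ->
  ohead (filter P s) = Some a <->
  [/\ a \in s, P a & forall b, b \in s -> P b -> (a <= b)%O].
Proof.
move=> sorted_s; have := sorted_filter le_trans P sorted_s.
have mem_head_min h r b : filter P s = h :: r -> sorted <=%O (h :: r) ->
    b \in s -> P b -> (h <= b)%O.
  move=> Es path_h bs Pb; have : b \in h :: r by rewrite -Es mem_filter Pb bs.
  rewrite in_cons => /predU1P[-> //|br].
  exact: (allP (order_path_min le_trans path_h)).
case Es: (filter P s) => [|h r] path_h.
  split=> // -[a_s Pa _]; have : a \in filter P s by rewrite mem_filter Pa a_s.
  by rewrite Es.
have : h \in filter P s by rewrite Es mem_head.
rewrite mem_filter => /andP[Ph hs] /=; split=> [[<-]|[a_s Pa a_min]].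
  by split=> // b; exact: mem_head_min Es path_h.
by congr Some; apply: le_anti; rewrite a_min // (mem_head_min _ _ _ Es path_h).
Qed.

Fixpoint tree_ind_Forall (P : tree -> Prop)
    (IH : forall cs, List.Forall P cs -> P (Node cs)) (t : tree) : P t :=
  let: Node cs := t in
  IH cs ((fix Forall_children cs : List.Forall P cs :=
            if cs is c :: cs' then
              List.Forall_cons c (tree_ind_Forall IH c) (Forall_children cs')
            else List.Forall_nil P) cs).

Lemma subt_cons cs i p : subt (Node cs) (i :: p) =
  if i < size cs then subt (nth (Node [::]) cs i) p else None.
Proof. by rewrite /=; case: ifP => // i_lt; rewrite (set_nth_default (Node [::])). Qed.

Lemma subt_cat t u x : subt t (u ++ x) = if subt t u is Some s then subt s x else None.
Proof. by elim: u t => [//|i u IH] [cs] /=; case: ifP. Qed.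

Lemma is_node_cons cs i p :
  is_node (Node cs) (i :: p) = (i < size cs) && is_node (nth (Node [::]) cs i) p.
Proof. by rewrite /is_node subt_cons; case: ifP. Qed.

Lemma is_internal_cons cs i p :
  is_internal (Node cs) (i :: p) = (i < size cs) && is_internal (nth (Node [::]) cs i) p.
Proof. by rewrite /is_internal subt_cons; case: ifP. Qed.

Lemma leaf_node t p : is_leaf t p -> is_node t p.
Proof. by rewrite /is_leaf /is_node; case: (subt t p). Qed.

Lemma internal_node t p : is_internal t p -> is_node t p.
Proof. by rewrite /is_internal /is_node; case: (subt t p). Qed.

Lemma leaf_internalF t p : is_leaf t p -> is_internal t p = false.
Proof. by rewrite /is_leaf /is_internal; case: (subt t p) => // -[[]]. Qed.

Fixpoint forest_preorder (i : nat) (cs : seq tree) : seq (seq nat) :=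
  if cs is c :: cs' then map (cons i) (preorder c) ++ forest_preorder i.+1 cs'
  else [::].

Lemma preorder_Node cs : preorder (Node cs) = [::] :: forest_preorder 0 cs.
Proof. by []. Qed.

Lemma mem_map_cons (T : eqType) (i a : T) p (s : seq (seq T)) :
  (a :: p \in map (cons i) s) = (a == i) && (p \in s).
Proof. by apply/mapP/andP => [[q q_s [-> ->]]|[/eqP-> p_s]]; last exists p. Qed.

Lemma mem_forest_preorder i cs a p : (a :: p \in forest_preorder i cs) =
  (i <= a < i + size cs) && (p \in preorder (nth (Node [::]) cs (a - i))).
Proof.
elim: cs i => [|c cs IH] i /=.
  by rewrite addn0; case: (leqP i a) => //= le_ia; rewrite ltnNge le_ia.
rewrite mem_cat IH mem_map_cons; case: (ltngtP a i) => [//|lt_ia|->] /=.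
  by rewrite -(subnSK lt_ia) addSnnS.
by rewrite subnn addnS ltnS leq_addr orbF.
Qed.

Lemma forest_preorder_head i cs x :
  x \in forest_preorder i cs -> exists a p, x = a :: p /\ i <= a.
Proof.
case: x => [|a p]; last by rewrite mem_forest_preorder => /andP[/andP[? _] _]; exists a, p.
by elim: cs i => //= c cs IH i; rewrite mem_cat => /orP[/mapP[? _ //]|/IH[? [? []]]].
Qed.

Lemma mem_preorder t p : (p \in preorder t) = is_node t p.
Proof.
elim: p t => [|a p IH] [cs] //.
by rewrite preorder_Node in_cons /= mem_forest_preorder subn0 IH is_node_cons.
Qed.

Lemma sorted_preorder t : sorted ltxi (preorder t).
Proof.
elim/tree_ind_Forall: t => cs IHcs.
rewrite preorder_Node (sorted_pairwise lt_trans) pairwise_cons.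
apply/andP; split.
  by apply/allP => _ /forest_preorder_head[a [p [-> _]]].
elim: cs IHcs 0 => [//|c cs IH] /List.Forall_cons_iff[sorted_c /IH{}IH] i /=.
rewrite pairwise_cat pairwise_map IH andbT; apply/andP; split.
  apply/allrelP => _ _ /mapP[p _ ->] /forest_preorder_head[a [q [-> lt_ia]]].
  by rewrite neqhead_ltxiE ?(ltn_eqF lt_ia).
move: sorted_c; rewrite (sorted_pairwise lt_trans).
by apply: sub_pairwise => p q /=; rewrite eqhead_ltxiE.
Qed.

Lemma mem_sub_nodes t u p : (p \in sub_nodes t u) = is_node t p && prefix u p.
Proof.
rewrite /sub_nodes /is_node; case E: (subt t u) => [s|]; last first.
  by rewrite in_nil; case/boolP: (prefix u p) => [/prefixP[x ->]|]; rewrite ?andbF ?subt_cat ?E.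
apply/mapP/andP => [[x x_s ->]|[p_node /prefixP[x Ep]]].
  by rewrite prefix_prefix subt_cat E -/(is_node s x) -mem_preorder.
by exists x; rewrite // mem_preorder; move: p_node; rewrite Ep subt_cat E.
Qed.

Lemma sorted_sub_nodes t u : sorted lexi (sub_nodes t u).
Proof.
rewrite /sub_nodes; case: (subt t u) => [s|//].
rewrite sorted_map; apply: sub_sorted (sorted_preorder s) => p q /ltW /=.
by rewrite lexi_catl.
Qed.

Lemma leaf_first_child n t l f : in_RS n t l -> is_leaf t f ->
  exists2 v, is_internal t v & f = rcons v 0.
Proof.
case=> _ count_internal count_leaf first_leaf leaf_f.
set I := [seq p <- preorder t | is_internal t p].
set L := [seq p <- preorder t | is_leaf t p].
have uniq_preorder : uniq (preorder t).
  by have := sorted_preorder t; rewrite lt_sorted_uniq_le => /andP[].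
have sub_IL : {subset map (rcons^~ 0) I <= L}.
  move=> x /mapP[v]; rewrite mem_filter => /andP[int_v _] ->.
  by rewrite mem_filter first_leaf // mem_preorder leaf_node ?first_leaf.
have uniq_IL : uniq (map (rcons^~ 0) I).
  by rewrite (map_inj_uniq (@rcons_injl _ 0)) filter_uniq.
have size_IL : size L <= size (map (rcons^~ 0) I).
  by rewrite size_map !size_filter count_internal count_leaf.
have [_ eq_IL] := uniq_min_size uniq_IL sub_IL size_IL.
have : f \in L by rewrite mem_filter leaf_f mem_preorder leaf_node.
by rewrite -eq_IL => /mapP[v]; rewrite mem_filter => /andP[int_v _] ->; exists v.
Qed.

Lemma ctr_shape_Node cs :
  ctr_shape (Node cs) = Node (map ctr_shape (filter internalb cs)).
Proof. by elim: cs => [//|[[|a b]] cs /= [->]]. Qed.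

Lemma ctr_path_cons cs i p : i < size cs ->
  ctr_path (Node cs) (i :: p) =
  count internalb (take i cs) :: ctr_path (nth (Node [::]) cs i) p.
Proof. by move=> i_lt /=; rewrite (set_nth_default (Node [::])). Qed.

Lemma size_ctr_path t p : size (ctr_path t p) = size p.
Proof. by elim: p t => [//|i p IH] [cs] /=; rewrite IH. Qed.

Lemma internalb_root t p : is_internal t p -> internalb t.
Proof.
case: p => [|i p]; first by case: t => -[].
by case: t => -[//|c cs]; rewrite /is_internal /=; case: ifP.
Qed.

Lemma count_internal_take_lt cs i j : i < j -> j <= size cs ->
  internalb (nth (Node [::]) cs i) ->
  count internalb (take i cs) < count internalb (take j cs).
Proof.
move=> lt_ij le_j int_i; rewrite -(subnKC lt_ij) takeD count_cat ltn_addr //.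
by rewrite (take_nth (Node [::])) ?(leq_trans lt_ij) // -cats1 count_cat /= int_i addn1.
Qed.

Lemma count_internal_take_inj cs i j : i < size cs -> j < size cs ->
  internalb (nth (Node [::]) cs i) -> internalb (nth (Node [::]) cs j) ->
  count internalb (take i cs) = count internalb (take j cs) -> i = j.
Proof.
move=> lt_i lt_j int_i int_j eq_ij; case: (ltngtP i j) => // [lt_ij|lt_ji].
  by move: (count_internal_take_lt lt_ij (ltnW lt_j) int_i); rewrite eq_ij ltnn.
by move: (count_internal_take_lt lt_ji (ltnW lt_i) int_j); rewrite eq_ij ltnn.
Qed.

Lemma nth_filter_internal cs i : i < size cs -> internalb (nth (Node [::]) cs i) ->
  count internalb (take i cs) < count internalb cs /\
  nth (Node [::]) (filter internalb cs) (count internalb (take i cs)) =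
  nth (Node [::]) cs i.
Proof.
elim: cs i => [//|c cs IH] [|i] /=; first by move=> _ ->.
by rewrite ltnS => /IH{}IH /IH[]; rewrite ltn_add2l; case: (internalb c).
Qed.

Lemma nth_filter_internalP cs j : j < count internalb cs ->
  exists2 i, i < size cs /\ internalb (nth (Node [::]) cs i) &
    count internalb (take i cs) = j /\
    nth (Node [::]) (filter internalb cs) j = nth (Node [::]) cs i.
Proof.
elim: cs j => [//|c cs IH] j /=; case int_c: (internalb c) => /=.
  case: j => [_|j]; first by exists 0; rewrite ?int_c.
  by rewrite add1n ltnS => /IH[i [? ?] [<- ?]]; exists i.+1; rewrite /= ?int_c.
by rewrite add0n => /IH[i [? ?] [<- ?]]; exists i.+1; rewrite /= ?int_c.
Qed.

Lemma is_node_ctr_path t w : is_internal t w -> is_node (ctr_shape t) (ctr_path t w).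
Proof.
elim: w t => [//|i w IH] [cs] /[dup] /internalb_root int_t.
rewrite is_internal_cons => /andP[lt_i int_w].
have [lt_ci nth_ci] := nth_filter_internal lt_i (internalb_root int_w).
rewrite ctr_path_cons // ctr_shape_Node is_node_cons size_map size_filter lt_ci.
by rewrite (nth_map (Node [::])) ?size_filter // nth_ci IH.
Qed.

Lemma ctr_path_onto t q : internalb t -> is_node (ctr_shape t) q ->
  exists2 w, is_internal t w & ctr_path t w = q.
Proof.
elim: q t => [|j q IH] [cs] int_t; first by exists [::].
rewrite ctr_shape_Node is_node_cons size_map size_filter => /andP[lt_j].
have [i [lt_i int_i] [count_i nth_j]] := nth_filter_internalP lt_j.
rewrite (nth_map (Node [::])) ?size_filter // nth_j => /(IH _ int_i)[w int_w <-].
by exists (i :: w); rewrite ?is_internal_cons ?lt_i // ctr_path_cons ?count_i.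
Qed.

Lemma prefix_ctr_path t u w : is_internal t u -> is_internal t w ->
  prefix (ctr_path t u) (ctr_path t w) = prefix u w.
Proof.
elim: u t w => [|i u IH] [cs] [|j w] //.
rewrite !is_internal_cons => /andP[lt_i int_u] /andP[lt_j int_w].
rewrite !ctr_path_cons // !prefix_cons.
have [eq_ij|neq_ij] := eqVneq i j.
  by subst j; rewrite !eqxx (IH _ _ int_u int_w).
apply/negbTE/andP => -[/eqP eq_count _]; move/eqP: neq_ij; apply.
exact: count_internal_take_inj (internalb_root int_u) (internalb_root int_w) eq_count.
Qed.

Lemma ctr_path_inj t u w : is_internal t u -> is_internal t w ->
  ctr_path t u = ctr_path t w -> u = w.
Proof.
move=> int_u int_w eq_uw.
have := prefix_ctr_path int_u int_w; rewrite eq_uw prefix_refl prefixE.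
by rewrite take_oversize -?(size_ctr_path t u) ?eq_uw ?size_ctr_path // => /esym/eqP.
Qed.

Lemma lexi_ctr_path t v w : is_internal t v -> is_node t w -> lexi v w ->
  lexi (ctr_path t v) (ctr_path t w).
Proof.
elim: v t w => [|i v IH] [cs] [|j w] //.
rewrite is_internal_cons is_node_cons => /andP[lt_i int_v] /andP[lt_j node_w].
rewrite !ctr_path_cons //; case: (ltngtP i j) => [lt_ij _|lt_ji|eq_ij].
- have := count_internal_take_lt lt_ij (ltnW lt_j) (internalb_root int_v).
  by move=> lt_count; rewrite neqhead_lexiE ?(ltn_eqF lt_count).
- by move=> /lexi_lehead le_ij; move: (leq_trans lt_ji le_ij); rewrite ltnn.
- by subst j; rewrite !eqhead_lexiE; exact: IH.
Qed.

Lemma ctr_label_path t l w : is_internal t w ->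
  ctr_label t l (ctr_path t w) = (l (rcons w 0) + 1)%R.
Proof.
move=> int_w; rewrite /ctr_label.
set S := [seq p <- preorder t | _].
have w_S : w \in S by rewrite mem_filter int_w eqxx mem_preorder internal_node.
have S_w p : p \in S -> p = w.
  by rewrite mem_filter => /andP[/andP[int_p /eqP]] /(ctr_path_inj int_p int_w).
by case: S w_S S_w => [//|p S] _ /(_ p (mem_head _ _))->.
Qed.

Theorem mainTheorem8 (n : nat) (R : tree) (l : seq nat -> int) (u f : seq nat) :
  in_RS n R l ->
  is_internal R u -> 0 < size u ->
  dec_cert R l u = Some f ->
  stk_cert (ctr_shape R) (ctr_label R l) (ctr_path R u)
    = Some (ctr_path R (parent f)).
Proof.
move=> RS int_u _ cert_f.
have first_leaf w : is_internal R w -> is_leaf R (rcons w 0) by case: RS => _ _ _; apply.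
have [f_sub /andP[leaf_f lt_f] f_min] :=
  (ohead_filter_sortedP _ _ (sorted_sub_nodes R u)).1 cert_f.
have [v int_v Ef] := leaf_first_child RS leaf_f; subst f.
rewrite /parent size_rcons -cats1 take_size_cat //.
have u_v : prefix u v.
  move: f_sub; rewrite mem_sub_nodes prefix_rcons_eq => /andP[_ /orP[/eqP Eu|//]].
  by move: leaf_f; rewrite -Eu => /leaf_internalF; rewrite int_u.
apply/(ohead_filter_sortedP _ _ (sorted_sub_nodes _ _)); split.
- by rewrite mem_sub_nodes is_node_ctr_path ?prefix_ctr_path.
- by rewrite /= ctr_label_path // size_ctr_path -Num.Theory.ltrBrDr.
move=> _ /[!mem_sub_nodes] /andP[/(ctr_path_onto (internalb_root int_u))[w int_w <-]].
rewrite prefix_ctr_path //= ctr_label_path // size_ctr_path => u_w lt_w.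
apply: lexi_ctr_path int_v (internal_node int_w) _; apply: lexi_rcons0; apply: f_min.
  by rewrite mem_sub_nodes leaf_node ?first_leaf // (prefix_trans u_w) ?prefix_rcons.
by rewrite /= first_leaf // Num.Theory.ltrBrDr.
Qed.
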